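(* Let $G$ be a finite trivially power-colorable graph with $k=\chi(G)$, let $\lambda$ be an infinite cardinal, and let $\Phi$ be a proper $k$-coloring of $G^\lambda$. Then there exist an ultrafilter $\mathcal U$ on $\lambda$ and a proper $k$-coloring $\phi$ of $G$ such that $\Phi=\phi^{\mathcal U}$.
   Context: Graphs are simple and undirected; a $k$-coloring is a proper coloring with colors in $\{0,\dots,k-1\}$. For graphs $(G_i)_{i\in I}$, the product $\times_{i\in I}G_i$ has vertex set $\times_{i\in I}V(G_i)$, with $(u_i)$ adjacent to $(v_i)$ iff $u_iv_i\in E(G_i)$ for all $i$; $G^I$ is the product of copies of $G$ indexed by $I$, and $G^n=G^{\{1,\dots,n\}}$. A coloring $\Phi$ of a product is trivial if there exist an index $i^*$ and a proper coloring $\phi$ of $G_{i^*}$ with $\Phi(v)=\phi(v_{i^*})$ for all $v$. $G$ is trivially power-colorable if for every positive integer $n$, every $\chi(G)$-coloring of $G^n$ is trivial. For an ultrafilter $\mathcal U$ on $\lambda$ and $\mathbf v=(v_\alpha)_{\alpha<\lambda}\in V(G^\lambda)$, $\mathbf v_{\mathcal U}$ is the unique $x\in V(G)$ with $\{\alpha<\lambda:v_\alpha=x\}\in\mathcal U$, and $\phi^{\mathcal U}(\mathbf v)=\phi(\mathbf v_{\mathcal U})$. *)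

From HB Require Import structures.
From mathcomp Require Import all_boot.
From mathcomp Require Import boolp classical_sets cardinality filter.

Set Implicit Arguments. Unset Strict Implicit. Unset Printing Implicit Defensive.

Definition simple_graph (T : Type) (e : rel T) : Prop :=
  symmetric e /\ irreflexive e.

Definition proper_coloring (V : Type) (adj : V -> V -> Prop) (k : nat)
  (c : V -> 'I_k) : Prop :=
  forall u v, adj u v -> c u <> c v.

Definition colorable (V : Type) (adj : V -> V -> Prop) (k : nat) : Prop :=
  exists c : V -> 'I_k, proper_coloring adj c.

Definition is_chromatic_number (V : Type) (adj : V -> V -> Prop) (k : nat) :=
  colorable adj k /\ forall m, m < k -> ~ colorable adj m.

Definition pow_adj (T : Type) (e : rel T) (I : Type) (u v : I -> T) : Prop :=
  forall i, e (u i) (v i).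

Definition trivial_coloring (T : Type) (e : rel T) (I : Type) (k : nat)
  (Phi : (I -> T) -> 'I_k) : Prop :=
  exists (i : I) (phi : T -> 'I_k),
    proper_coloring (fun x y => e x y) phi /\ forall v, Phi v = phi (v i).

Definition trivially_power_colorable (T : Type) (e : rel T) : Prop :=
  forall chi, is_chromatic_number (fun x y => e x y) chi ->
  forall n, 0 < n ->
  forall Phi : ('I_n -> T) -> 'I_chi,
    proper_coloring (@pow_adj T e 'I_n) Phi -> trivial_coloring e Phi.

(* v_U = x : the set {a | v a = x} belongs to the ultrafilter U. *)
Definition ulim_is (I T : Type) (U : set_system I) (v : I -> T) (x : T) : Prop :=
  U (fun a : I => v a = x).

From mathcomp Require Import all_boot.
From mathcomp Require Import boolp classical_sets cardinality filter.

(* Fix a proper k-coloring Phi of G^I and let phi(t) be the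
   color Phi gives to the constant vertex t.  Call a block j of a finite
   partition v : I -> J of the index set "decisive" if Phi(x o v) = phi(x j)
   for every x : J -> T, i.e. on vertices that are constant on the blocks
   of v, Phi only looks at the block j.  Pulling Phi back along v gives a
   k-coloring of G^|J|, which is trivial by trivial power-colorability; its
   relevant coordinate is a decisive block.  If G has an edge, the decisive
   block is unique, and it is compatible with maps between partitions.
   Then the sets A whose indicator partition has "true" as decisive block
   form an ultrafilter U, and decisiveness applied to the partition
   i |-> v i yields Phi(v) = phi(v_U).  If G has no edge, k <= 1 and any
   principal ultrafilter works (I is non-empty since it is infinite). *)

Set Implicit Arguments. Unset Strict Implicit. Unset Printing Implicit Defensive.
Local Open Scope classical_set_scope.

Lemma ultra_of_dichotomy (X : Type) (F : set_system X) :
  ProperFilter F -> (forall A, F A \/ F (~` A)) -> UltraFilter F.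
Proof.
move=> PF dichotomy; split=> // G PG sFG.
apply: funext => A; apply: propext; split; last exact: sFG.
move=> GA; case: (dichotomy A) => // /sFG GnA.
exfalso; apply: (filter_not_empty G).
by rewrite -(setICr A); apply: filterI.
Qed.

Lemma edgeless_chromatic_le1 (T : Type) (e : rel T) (k : nat) :
  (forall a b, ~ e a b) -> is_chromatic_number (fun x y => e x y) k -> k <= 1.
Proof.
move=> edgeless [_ minimal]; rewrite leqNgt; apply/negP => /minimal; apply.
by exists (fun _ => ord0) => u v /edgeless.
Qed.

Lemma ord_le1_eq (k : nat) (c d : 'I_k) : k <= 1 -> c = d.
Proof.
move=> k_le1; apply: val_inj.
have := leq_trans (ltn_ord c) k_le1; have := leq_trans (ltn_ord d) k_le1.
by rewrite !ltnS !leqn0 => /eqP d0 /eqP c0; rewrite /= c0 d0.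
Qed.

Section DecisiveBlocks.

Variables (T : finType) (e : rel T) (k : nat) (I : Type).
Variable Phi : (I -> T) -> 'I_k.
Hypothesis Phi_proper : proper_coloring (@pow_adj T e I) Phi.

Definition diagonal_coloring (t : T) : 'I_k := Phi (fun _ => t).

Lemma diagonal_coloring_proper :
  proper_coloring (fun x y => e x y) diagonal_coloring.
Proof. by move=> x y exy; apply: Phi_proper => i. Qed.

Definition decisive (J : finType) (v : I -> J) (j : J) : Prop :=
  forall x : J -> T, Phi (x \o v) = diagonal_coloring (x j).

Lemma decisive_const (J : finType) (j : J) : decisive (fun _ => j) j.
Proof. by []. Qed.

Lemma decisive_map (J J' : finType) (f : J -> J') (v : I -> J) (j : J) :
  decisive v j -> decisive (f \o v) (f j).
Proof. by move=> dec x; apply: (dec (x \o f)). Qed.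

Lemma decisive_exists (J : finType) (v : I -> J) (j0 : J) :
  trivially_power_colorable e -> is_chromatic_number (fun x y => e x y) k ->
  exists j, decisive v j.
Proof.
move=> tpc chi; have J_gt0 : 0 < #|J| by apply/card_gt0P; exists j0.
pose Psi (y : 'I_#|J| -> T) := Phi (fun i => y (enum_rank (v i))).
have Psi_proper : proper_coloring (@pow_adj T e 'I_#|J|) Psi.
  by move=> y y' yy'; apply: Phi_proper => i; apply: yy'.
have [m [psi [_ Psi_psi]]] := tpc k chi _ J_gt0 Psi Psi_proper.
have Phi_psi (x : J -> T) : Phi (x \o v) = psi (x (enum_val m)).
  rewrite -(Psi_psi (x \o enum_val)) /Psi /=.
  by congr Phi; apply: funext => i /=; rewrite enum_rankK.
exists (enum_val m) => x.
by rewrite Phi_psi /diagonal_coloring (Phi_psi (fun _ => x (enum_val m))).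
Qed.

Section WithEdge.

Variables a b : T.
Hypothesis ab : e a b.

(* If G has an edge ab, two distinct blocks cannot both be decisive: color
   block j1 by a and everything else by b. *)
Lemma decisive_unique (J : finType) (v : I -> J) (j1 j2 : J) :
  decisive v j1 -> decisive v j2 -> j1 = j2.
Proof.
move=> dec1 dec2; apply/eqP/negP => /negP j1j2.
have := dec1 (fun j => if j == j1 then a else b).
rewrite dec2 eqxx eq_sym (negbTE j1j2).
by move/esym; apply: diagonal_coloring_proper ab.
Qed.

Hypotheses (tpc : trivially_power_colorable e)
           (chi : is_chromatic_number (fun x y => e x y) k).

Lemma decisive_combine (J1 J2 J3 : finType) (op : J1 -> J2 -> J3)
    (v : I -> J1) (w : I -> J2) (p : J1) (q : J2) :
  decisive v p -> decisive w q -> decisive (fun i => op (v i) (w i)) (op p q).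
Proof.
move=> dec_v dec_w.
have [[p' q'] dec_vw] := decisive_exists (fun i => (v i, w i)) (p, q) tpc chi.
have <- : p' = p by apply: decisive_unique dec_v; apply: (decisive_map fst dec_vw).
have <- : q' = q by apply: decisive_unique dec_w; apply: (decisive_map snd dec_vw).
exact: (decisive_map (fun pq => op pq.1 pq.2) dec_vw).
Qed.

Definition indicator (A : set I) : I -> bool := fun i => `[< A i >].

Lemma indicator_set0 : indicator set0 = fun _ => false.
Proof. by apply: funext => i; apply: asboolF. Qed.

Lemma indicator_setT : indicator setT = fun _ => true.
Proof. by apply: funext => i; apply: asboolT. Qed.

Lemma indicator_setI (A B : set I) :
  indicator (A `&` B) = fun i => indicator A i && indicator B i.
Proof. by apply: funext => i; apply: asbool_and. Qed.

Lemma indicator_setU (A B : set I) :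
  indicator (A `|` B) = fun i => indicator A i || indicator B i.
Proof. by apply: funext => i; apply: asbool_or. Qed.

Lemma indicator_setC (A : set I) : indicator (~` A) = negb \o indicator A.
Proof. by apply: funext => i; apply: asbool_neg. Qed.

Definition decisive_sets : set_system I := fun A => decisive (indicator A) true.

(* Intersections and supersets (B = A `|` B) are handled by combining the
   decisive blocks of the indicators with andb and orb. *)
Lemma decisive_sets_proper : ProperFilter decisive_sets.
Proof.
split; last split.
- rewrite /decisive_sets indicator_set0.
  by move/(decisive_unique (decisive_const false)).
- by rewrite /decisive_sets indicator_setT.
- move=> A B UA UB; rewrite /decisive_sets indicator_setI.
  exact: (decisive_combine andb UA UB).
- move=> A B /setUidr <- UA.
  have [c UBc] := decisive_exists (indicator B) true tpc chi.
  by rewrite /decisive_sets indicator_setU; apply: (decisive_combine orb UA UBc).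
Qed.

(* Either A or its complement is in decisive_sets, as the indicator of A has
   a decisive block. *)
Lemma decisive_sets_ultra : UltraFilter decisive_sets.
Proof.
apply: ultra_of_dichotomy decisive_sets_proper _ => A.
have [[] dec] := decisive_exists (indicator A) true tpc chi; first by left.
by right; rewrite /decisive_sets indicator_setC; apply: (decisive_map negb dec).
Qed.

Lemma decisive_sets_limit (v : I -> T) (x : T) :
  ulim_is decisive_sets v x -> Phi v = diagonal_coloring x.
Proof.
move=> Uvx.
have [t dec_t] := decisive_exists v a tpc chi.
have := decisive_map (fun s => s == x) dec_t.
have -> : (fun s => s == x) \o v = indicator (fun i => v i = x).
  by apply: funext => i; apply/eqP/asboolP.
by move=> /(decisive_unique Uvx) /esym /eqP <-; apply: (dec_t id).
Qed.

End WithEdge.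

End DecisiveBlocks.

Theorem mainTheorem15 (T : finType) (e : rel T) (k : nat) (I : Type)
  (Phi : (I -> T) -> 'I_k) :
  simple_graph e ->
  trivially_power_colorable e ->
  is_chromatic_number (fun x y => e x y) k ->
  infinite_set [set: I] ->
  proper_coloring (@pow_adj T e I) Phi ->
  exists (U : set_system I) (phi : T -> 'I_k),
    UltraFilter U /\ proper_coloring (fun x y => e x y) phi /\
    forall (v : I -> T) (x : T), ulim_is U v x -> Phi v = phi x.
Proof.
move=> _ tpc chi I_infinite Phi_proper.
case: (pselect (exists a b, e a b)) => [[a [b ab]] | no_edge].
  exists (decisive_sets Phi), (diagonal_coloring Phi).
  split; first exact: decisive_sets_ultra ab tpc chi.
  split; first exact: diagonal_coloring_proper.
  exact: decisive_sets_limit ab tpc chi.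
have edgeless (a b : T) : ~ e a b by move=> ab; apply: no_edge; exists a, b.
have [i0 _] := infinite_setN0 I_infinite.
exists (principal_filter i0), (diagonal_coloring Phi).
split; first exact: principal_filter_ultra.
split; first by move=> x y /edgeless.
by move=> v x _; apply: ord_le1_eq; apply: edgeless_chromatic_le1 edgeless chi.
Qed.
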